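(* Let $J\in\mathcal{D}(X)$ and, for each $x\in X$, let $\bar U(x)\subset U(x)$ be such that $(\bar TJ)(x)\le J(x)$ for all $x\in X$, where $(\bar TJ')(x)=\inf_{u\in\bar U(x)}\{g(x,u)+J'(f(x,u))\}$ for $J'\in\mathcal{E}^+(X)$. Then $\bar T^\ell J\in\mathcal{D}(X)$ for every positive integer $\ell$, where $\bar T^\ell$ denotes the $\ell$-fold composition of $\bar T$.
   Context: Setting: $X$ (state space) and $U$ (control space) are sets; for each $x\in X$, $U(x)\subset U$ is nonempty; $f:X\times U\to X$; the stage cost $g$ satisfies $0\le g(x,u)\le\infty$ for all $x\in X$, $u\in U(x)$. $\mathcal{E}^+(X)$ denotes the set of all functions $J:X\to[0,\infty]$. The Bellman operator is $(TJ)(x)=\inf_{u\in U(x)}\{g(x,u)+J(f(x,u))\}$. The region of decreasing is $\mathcal{D}(X)=\{J\in\mathcal{E}^+(X): (TJ)(x)\le J(x)\ \forall x\in X\}$. Standing assumption: for every $J\in\mathcal{E}^+(X)$ and every $x\in X$, the infimum defining $(TJ)(x)$ is attained. *)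

From mathcomp Require Import all_boot all_order all_algebra.
From mathcomp Require Import all_classical all_reals ereal.
Set Implicit Arguments. Unset Strict Implicit. Unset Printing Implicit Defensive.
Import Order.TTheory GRing.Theory Num.Theory.
Local Open Scope classical_set_scope.
Local Open Scope ereal_scope.

Definition Eplus (R : realType) (X : Type) (J : X -> \bar R) : Prop :=
  forall x, 0 <= J x.

Definition Top (R : realType) (X U : Type) (Uc : X -> set U)
  (f : X -> U -> X) (g : X -> U -> \bar R) (J : X -> \bar R) : X -> \bar R :=
  fun x => ereal_inf [set g x u + J (f x u) | u in Uc x].

Definition Dreg (R : realType) (X U : Type) (Uc : X -> set U)
  (f : X -> U -> X) (g : X -> U -> \bar R) (J : X -> \bar R) : Prop :=
  Eplus J /\ forall x, Top Uc f g J x <= J x.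

Definition inf_attained (R : realType) (X U : Type) (Uc : X -> set U)
  (f : X -> U -> X) (g : X -> U -> \bar R) : Prop :=
  forall J : X -> \bar R, Eplus J -> forall x,
    exists2 u, Uc x u & Top Uc f g J x = g x u + J (f x u).

From mathcomp Require Import all_boot all_order all_algebra.
From mathcomp Require Import all_classical all_reals ereal.
Set Implicit Arguments. Unset Strict Implicit. Unset Printing Implicit Defensive.
Import Order.TTheory GRing.Theory Num.Theory.
Local Open Scope classical_set_scope.
Local Open Scope ereal_scope.

(* Top is antitone in the constraint sets and monotone in J.  Hence from
   Tbar J <= J one gets Tbar^(l+1) J <= Tbar^l J by induction, and
   T (Tbar^l J) <= Tbar (Tbar^l J) = Tbar^(l+1) J <= Tbar^l J since the
   infimum defining T runs over the larger sets U(x). *)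

Section BellmanOperator.
Variables (R : realType) (X U : Type) (f : X -> U -> X) (g : X -> U -> \bar R).

Lemma Top_le (S S' : X -> set U) (J1 J2 : X -> \bar R) :
  (forall x, S' x `<=` S x) -> (forall x, J1 x <= J2 x) ->
  forall x, Top S f g J1 x <= Top S' f g J2 x.
Proof.
move=> sub_S'S le_J1J2 x; apply: le_ereal_inf_tmp => _ [u S'u <-].
apply: ge_ereal_inf; exists (g x u + J1 (f x u)); first by exists u; [apply: sub_S'S|].
exact: leeD2l.
Qed.

Lemma Top_ge0 (S : X -> set U) (J : X -> \bar R) :
  (forall x u, S x u -> 0 <= g x u) -> Eplus J -> Eplus (Top S f g J).
Proof.
move=> g_ge0 J_ge0 x; apply: le_ereal_inf_tmp => _ [u Su <-].
exact: adde_ge0 (g_ge0 _ _ Su) (J_ge0 _).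
Qed.

Lemma iter_Top_ge0 (S : X -> set U) (J : X -> \bar R) :
  (forall x u, S x u -> 0 <= g x u) -> Eplus J ->
  forall l, Eplus (iter l (Top S f g) J).
Proof. by move=> g_ge0 J_ge0; elim=> [|l IHl] //=; apply: Top_ge0. Qed.

Lemma iter_Top_nonincreasing (S : X -> set U) (J : X -> \bar R) :
  (forall x, Top S f g J x <= J x) ->
  forall l x, iter l.+1 (Top S f g) J x <= iter l (Top S f g) J x.
Proof.
move=> TJ_le; elim=> [|l IHl] x; first exact: TJ_le.
by apply: Top_le => // y u.
Qed.

End BellmanOperator.

Theorem corollary4 (R : realType) (X U : Type) (Uc : X -> set U)
  (f : X -> U -> X) (g : X -> U -> \bar R)
  (HU : forall x, Uc x !=set0)
  (Hg : forall x u, Uc x u -> 0 <= g x u)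
  (Hatt : inf_attained Uc f g)
  (J : X -> \bar R) (HJ : Dreg Uc f g J)
  (Ub : X -> set U) (HUb : forall x, Ub x `<=` Uc x)
  (HTb : forall x, Top Ub f g J x <= J x) :
  forall l : nat, (0 < l)%N -> Dreg Uc f g (iter l (Top Ub f g) J).
Proof.
move=> l _; have [J_ge0 _] := HJ.
have gb_ge0 x u : Ub x u -> 0 <= g x u by move/HUb; apply: Hg.
split; first exact: iter_Top_ge0.
move=> x; apply: le_trans (iter_Top_nonincreasing HTb l x).
by apply: Top_le => // y; exact: HUb.
Qed.
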